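(* Let $n\ge3$ and $s\ge1$ be integers. Then $p_{2s}(n,2sd)\to\infty$ as $d\to\infty$.
   Context: $\mathbb{R}[x_1,\dots,x_n]_e$ denotes the real vector space of homogeneous polynomials (forms) of degree $e$ in $n$ variables. For integers $n,m,d\ge1$, let $\Sigma^m_{n,md}\subset\mathbb{R}[x_1,\dots,x_n]_{md}$ be the set of forms $f=\sum_{i=1}^r f_i^m$ with $r\in\mathbb{N}$ and $f_i\in\mathbb{R}[x_1,\dots,x_n]_d$. The homogeneous Pythagoras number $p_m(n,md)$ is the minimal $\ell$ such that every $f\in\Sigma^m_{n,md}$ admits such a representation with $r\le\ell$. *)

From mathcomp Require Import all_boot all_algebra.
From mathcomp Require Import reals.
From mathcomp Require Import mpoly.
Set Implicit Arguments. Unset Strict Implicit. Unset Printing Implicit Defensive.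
Import GRing.Theory.
Local Open Scope ring_scope.

Definition sum_pow_rep (R : realType) (n m d r : nat) (f : {mpoly R[n]}) : Prop :=
  exists F : 'I_r -> {mpoly R[n]},
    (forall i, F i \is d.-homog) /\ f = \sum_(i < r) (F i) ^+ m.

Definition in_Sigma (R : realType) (n m d : nat) (f : {mpoly R[n]}) : Prop :=
  exists r, sum_pow_rep m d r f.

(* "p_m(n, m d) <= l": every f in Sigma^m_{n,md} is a sum of at most l
   m-th powers of degree-d forms.  The homogeneous Pythagoras number
   p_m(n,md) is the least l with this property (monotone in l), so
   p_m(n,md) > B  <->  ~ pyth_le R n m d B. *)
Definition pyth_le (R : realType) (n m d l : nat) : Prop :=
  forall f : {mpoly R[n]}, in_Sigma m d f ->
    exists r, (r <= l)%N /\ sum_pow_rep m d r f.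

From mathcomp Require Import all_boot all_algebra.
From mathcomp Require Import reals.
From mathcomp Require Import mpoly.
From mathcomp Require Import zify ring.
Set Implicit Arguments. Unset Strict Implicit. Unset Printing Implicit Defensive.
Import GRing.Theory Num.Theory.
Local Open Scope ring_scope.

(* Let L = d + 1, l_j = x_0 + j x_1 + j^2 x_2 and H_m = prod_(j < L, j <> m) l_j,
   and suppose f = sum_m H_m^(2s) = sum_(i < r) F_i^(2s) with deg F_i = d.
   Work in the plane x_2 = 1, x_3 = ... = 0.  At a node l_j = l_k = 0 every H_m
   vanishes, hence so does every F_i; and a function of degree <= d on every
   line vanishing at the nodes of these L lines is a combination of the H_m,
   so F_i = sum_m lam_im H_m.  Expanding sum_m H_m^(2s) = sum_i (sum_m lam_im H_m)^(2s)
   along a line through a node gives 1 + y^(2s) = sum_i (lam_ij + lam_ik y)^(2s)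
   for j <> k.  Its constant and linear coefficients in y say that the r x L
   matrices (lam_im^(2s-1)) and (lam_im) satisfy W^T U = 1, so r >= L = d + 1. *)

Section PolyFun.
Variable R : numDomainType.
Implicit Types (phi psi : R -> R) (N M : nat).

Definition polyfun N phi :=
  exists q : {poly R}, (size q <= N.+1)%N /\ forall t, q.[t] = phi t.

Lemma polyfun_leq N M phi : (N <= M)%N -> polyfun N phi -> polyfun M phi.
Proof. by move=> le [q [sq hq]]; exists q; split=> //; exact: leq_trans sq _. Qed.

Lemma eq_polyfun N phi psi : phi =1 psi -> polyfun N phi -> polyfun N psi.
Proof. by move=> e [q [sq hq]]; exists q; split=> // t; rewrite hq e. Qed.

Lemma polyfun_cst N (c : R) : polyfun N (fun _ => c).
Proof.
exists c%:P; split=> [|t]; last exact: hornerC.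
by rewrite size_polyC (leq_trans (leq_b1 _)).
Qed.

Lemma polyfun_affine (a b : R) : polyfun 1 (fun t => a + t * b).
Proof.
exists (a%:P + b *: 'X); split=> [|t]; last by rewrite !hornerE mulrC.
rewrite (leq_trans (size_polyD _ _)) // geq_max size_polyC (leq_trans (leq_b1 _)) //.
by rewrite (leq_trans (size_scale_leq _ _)) ?size_polyX.
Qed.

Lemma polyfun_add N phi psi :
  polyfun N phi -> polyfun N psi -> polyfun N (fun t => phi t + psi t).
Proof.
move=> [p [sp hp]] [q [sq hq]]; exists (p + q); split=> [|t]; last by rewrite hornerD hp hq.
by rewrite (leq_trans (size_polyD _ _)) // geq_max sp sq.
Qed.

Lemma polyfun_opp N phi : polyfun N phi -> polyfun N (fun t => - phi t).
Proof.
by move=> [p [sp hp]]; exists (- p); split=> [|t]; rewrite ?size_polyN ?hornerN ?hp.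
Qed.

Lemma polyfun_mul N M phi psi :
  polyfun N phi -> polyfun M psi -> polyfun (N + M) (fun t => phi t * psi t).
Proof.
move=> [p [sp hp]] [q [sq hq]]; exists (p * q); split=> [|t]; last by rewrite hornerM hp hq.
apply: leq_trans (size_polyMleq _ _) _; move: sp sq.
by case: (size p) => [|a]; case: (size q) => [|b] /=; lia.
Qed.

Lemma polyfun_scale N (c : R) phi : polyfun N phi -> polyfun N (fun t => c * phi t).
Proof. exact: (polyfun_mul (polyfun_cst 0 c)). Qed.

Lemma polyfun_exp N phi k : polyfun N phi -> polyfun (N * k) (fun t => phi t ^+ k).
Proof.
move=> h; elim: k => [|k ih]; first by apply: eq_polyfun (polyfun_cst _ 1) => t; rewrite expr0.
by rewrite mulnS; apply: eq_polyfun (polyfun_mul h ih) => t; rewrite exprS.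
Qed.

Lemma polyfun_sum (I : Type) (r : seq I) (P : pred I) N (F : I -> R -> R) :
  (forall i, P i -> polyfun N (F i)) -> polyfun N (fun t => \sum_(i <- r | P i) F i t).
Proof.
move=> h; elim: r => [|x r ih]; first by apply: eq_polyfun (polyfun_cst _ 0) => t; rewrite big_nil.
case Px: (P x).
  by apply: eq_polyfun (polyfun_add (h x Px) ih) => t; rewrite big_cons Px.
by apply: eq_polyfun ih => t; rewrite big_cons Px.
Qed.

Lemma polyfun_prod (I : Type) (r : seq I) (P : pred I) (Nf : I -> nat) (F : I -> R -> R) :
  (forall i, P i -> polyfun (Nf i) (F i)) ->
  polyfun (\sum_(i <- r | P i) Nf i) (fun t => \prod_(i <- r | P i) F i t).
Proof.
move=> h; elim: r => [|x r ih].
  by rewrite big_nil; apply: eq_polyfun (polyfun_cst _ 1) => t; rewrite big_nil.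
rewrite big_cons; case Px: (P x); last by apply: eq_polyfun ih => t; rewrite big_cons Px.
by apply: eq_polyfun (polyfun_mul (h x Px) ih) => t; rewrite big_cons Px.
Qed.

Lemma polyfun_prod_affine (I : Type) (r : seq I) (P : pred I) (a b : I -> R) :
  polyfun (size r) (fun t => \prod_(i <- r | P i) (a i + t * b i)).
Proof.
apply: polyfun_leq (polyfun_prod (Nf := fun=> 1%N) _ (fun i _ => polyfun_affine (a i) (b i))).
by rewrite sum1_count count_size.
Qed.

Lemma natr_uniq (s : seq nat) : uniq s -> uniq [seq (i%:R : R) | i <- s].
Proof. by move=> us; rewrite map_inj_uniq // => a b /eqP; rewrite eqr_nat => /eqP. Qed.

Lemma polyfun_roots N phi (rs : seq R) :
  polyfun N phi -> uniq rs -> (N < size rs)%N -> {in rs, forall x, phi x = 0} -> phi =1 fun=> 0.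
Proof.
move=> [q [sq hq]] urs lrs hz t; rewrite -hq.
suff -> : q = 0 by rewrite horner0.
apply: roots_geq_poly_eq0 urs (leq_trans sq lrs).
by apply/allP => x xr; rewrite /root hq hz.
Qed.

Lemma polyfun_at0 N phi : polyfun N phi -> (forall t, t != 0 -> phi t = 0) -> phi 0 = 0.
Proof.
move=> h hz; apply: (polyfun_roots h (natr_uniq (iota_uniq 1 N.+1))).
  by rewrite size_map size_iota.
move=> x /mapP [i]; rewrite mem_iota => /andP [i1 _] ->.
by apply: hz; rewrite pnatr_eq0 -lt0n.
Qed.

Lemma poly_eq0_horner (p : {poly R}) : (forall x, p.[x] = 0) -> p = 0.
Proof.
move=> h; apply: (roots_geq_poly_eq0 _ (natr_uniq (iota_uniq 0 (size p)))).
  by apply/allP => x _; rewrite /root h.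
by rewrite size_map size_iota.
Qed.

Lemma polyfun_meval n d (g : {mpoly R[n]}) (P W : 'I_n -> R) :
  g \is d.-homog -> polyfun d (fun t => g.@[fun i => P i + t * W i]).
Proof.
move=> /dhomogP hg.
apply: (@eq_polyfun _ (fun t => \sum_(m <- msupp g | m \in msupp g)
    g@_m * \prod_(i <- index_enum 'I_n | true) (P i + t * W i) ^+ m i)).
  by move=> t; rewrite mevalE big_seq.
apply: polyfun_sum => m /hg md.
have -> : d = (0 + \sum_(i <- index_enum 'I_n) m i)%N by rewrite add0n -md; exact: mdegE.
apply: polyfun_mul; first exact: polyfun_cst.
apply: polyfun_prod => i _.
by have := polyfun_exp (m i) (polyfun_affine (P i) (W i)); rewrite mul1n.
Qed.

End PolyFun.

Lemma bigD1_seq_cond (R : Type) (idx : R) (op : Monoid.com_law idx) (I : eqType)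
    (r : seq I) (P : pred I) (F : I -> R) j : j \in r -> uniq r -> P j ->
  \big[op/idx]_(i <- r | P i) F i = op (F j) (\big[op/idx]_(i <- r | P i && (i != j)) F i).
Proof.
move=> jr ur Pj; rewrite -big_filter (bigD1_seq j) ?mem_filter ?Pj ?filter_uniq //.
by rewrite big_filter_cond.
Qed.

Lemma count_iota_neq L m : (m < L)%N -> count (fun j => j != m) (iota 0 L) = L.-1.
Proof.
move=> mL; have := count_predC (pred1 m) (iota 0 L).
rewrite size_iota (count_uniq_mem _ (iota_uniq 0 L)) mem_iota add0n mL.
by case: L mL => // L _; rewrite add1n => -[].
Qed.

Section LineArrangement.
Variable R : numFieldType.
Implicit Types (a b u : R) (d j k m L : nat).

(* In the chart x_2 = 1 of the plane x_3 = ... = 0, ell m is the linear form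
   x_0 + m x_1 + m^2 x_2 and hprod L m the form H_m.  The line ell j = 0 is
   parametrised by (lineA j u, lineB j u); it meets ell k = 0 at u = k. *)
Definition ell m a b : R := a + m%:R * b + m%:R ^+ 2.
Definition hprod L m a b : R := \prod_(j <- iota 0 L | j != m) ell j a b.
Definition lineA j u : R := u * j%:R.
Definition lineB j u : R := - j%:R - u.

Lemma ell_line m j u : ell m (lineA j u) (lineB j u) = (m%:R - j%:R) * (m%:R - u).
Proof. by rewrite /ell /lineA /lineB; ring. Qed.

Lemma hprod_eq0 L m j a b : (j < L)%N -> j != m -> ell j a b = 0 -> hprod L m a b = 0.
Proof.
move=> jL jm e; apply/eqP; rewrite prodf_seq_eq0; apply/hasP; exists j.
  by rewrite mem_iota add0n.
by rewrite jm e eqxx.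
Qed.

Lemma hprod_node L m j k : (j < L)%N -> (k < L)%N -> j != k ->
  hprod L m (lineA j k%:R) (lineB j k%:R) = 0.
Proof.
move=> jL kL jk; case: (eqVneq m j) => [-> | mj].
  by apply: (hprod_eq0 kL); rewrite 1?eq_sym // ell_line subrr mulr0.
by apply: (hprod_eq0 jL); rewrite 1?eq_sym // ell_line subrr mul0r.
Qed.

Lemma hprod_line_neq0 L m : hprod L m (lineA m m%:R) (lineB m m%:R) != 0.
Proof.
rewrite prodf_seq_neq0; apply/allP => j _; apply/implyP => jm.
by rewrite ell_line mulf_neq0 // subr_eq0 eqr_nat.
Qed.

Definition polyfun2 d (g : R -> R -> R) :=
  forall a0 a1 b0 b1, polyfun d (fun t => g (a0 + t * a1) (b0 + t * b1)).

Lemma polyfun2_line d g j : polyfun2 d g -> polyfun d (fun u => g (lineA j u) (lineB j u)).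
Proof.
move=> /(_ 0 j%:R (- j%:R) (-1)); apply: eq_polyfun => u.
by rewrite /lineA /lineB; congr g; ring.
Qed.

Lemma polyfun2_hprod L m : (m < L)%N -> polyfun2 L.-1 (hprod L m).
Proof.
move=> mL a0 a1 b0 b1; rewrite -(count_iota_neq mL) -sum1_count.
apply: eq_polyfun (polyfun_prod _ (fun j _ => polyfun_affine
   (a0 + j%:R * b0 + j%:R ^+ 2) (a1 + j%:R * b1))) => t.
by apply: eq_bigr => j _; rewrite /ell; ring.
Qed.

Lemma polyfun2_sub_comb d g (lam : 'I_d.+1 -> R) : polyfun2 d g ->
  polyfun2 d (fun a b => g a b - \sum_(m < d.+1) lam m * hprod d.+1 m a b).
Proof.
move=> gP a0 a1 b0 b1; apply: polyfun_add (gP a0 a1 b0 b1) _.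
apply: polyfun_opp; apply: polyfun_sum => m _.
exact: polyfun_scale (polyfun2_hprod (ltn_ord m) a0 a1 b0 b1).
Qed.

Lemma polyfun2_eq0_on_lines d h : polyfun2 d h ->
  (forall j u, (j < d.+1)%N -> h (lineA j u) (lineB j u) = 0) -> forall a b, h a b = 0.
Proof.
move=> hP h0 a b.
(* The line b = c meets the lines ell j = 0 at the distinct points a = - j (j + c). *)
have horiz c : forall t, h t c%:R = 0.
  have hc : polyfun d (fun t => h t c%:R).
    by apply: eq_polyfun (hP 0 1 c%:R 0) => t; rewrite add0r mulr1 mulr0 addr0.
  apply: (polyfun_roots hc (rs := [seq - ((j * (j + c))%:R : R) | j <- iota 0 d.+1])).
  - rewrite map_inj_uniq ?iota_uniq // => x y /eqP; rewrite eqr_opp eqr_nat => /eqP e.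
    by case: (ltngtP x y) => // xy; exfalso; move: e; nia.
  - by rewrite size_map size_iota.
  move=> x /mapP [j]; rewrite mem_iota add0n => /andP [_ jL] ->.
  by rewrite -(h0 j (- (j + c)%:R) jL) /lineA /lineB !natrD !natrM; congr h; ring.
have vert : polyfun d (fun t => h a t).
  by apply: eq_polyfun (hP a 0 0 1) => t; rewrite mulr0 addr0 add0r mulr1.
apply: (polyfun_roots vert (natr_uniq R (iota_uniq 0 d.+1)) _ _ b).
  by rewrite size_map size_iota.
by move=> x /mapP [c _ ->]; apply: horiz.
Qed.

End LineArrangement.

Section Interpolation.
Variables (R : numFieldType) (d : nat) (g : R -> R -> R).
Local Notation L := d.+1.
Hypothesis g_poly : polyfun2 d g.
Hypothesis g_nodes : forall j k, (j < L)%N -> (k < L)%N -> j != k ->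
  g (lineA j k%:R) (lineB j k%:R) = 0.

Definition interp_coef (m : nat) : R :=
  g (lineA m m%:R) (lineB m m%:R) / hprod L m (lineA m m%:R) (lineB m m%:R).

Lemma interp_on_line j u : (j < L)%N ->
  g (lineA j u) (lineB j u) = interp_coef j * hprod L j (lineA j u) (lineB j u).
Proof.
move=> jL; apply/eqP; rewrite -subr_eq0; apply/eqP; move: u.
have diffP : polyfun d (fun u =>
    g (lineA j u) (lineB j u) - interp_coef j * hprod L j (lineA j u) (lineB j u)).
  apply: polyfun_add (polyfun2_line _ g_poly) (polyfun_opp (polyfun_scale _ _)).
  exact: polyfun2_line (polyfun2_hprod jL).
apply: (polyfun_roots diffP (natr_uniq R (iota_uniq 0 L))); first by rewrite size_map size_iota.
move=> x /mapP [k]; rewrite mem_iota add0n => /andP [_ kL] ->.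
case: (eqVneq k j) => [-> | kj]; first by rewrite /interp_coef divfK ?subrr ?hprod_line_neq0.
by rewrite g_nodes 1?eq_sym // hprod_node 1?eq_sym // mulr0 subrr.
Qed.

Lemma interp_hprod a b : g a b = \sum_(m < L) interp_coef m * hprod L m a b.
Proof.
apply/eqP; rewrite -subr_eq0; apply/eqP; move: a b.
apply: polyfun2_eq0_on_lines (polyfun2_sub_comb _ g_poly) _ => j u jL.
rewrite (interp_on_line _ jL) (bigD1 (Ordinal jL)) //= big1 ?addr0 ?subrr // => m mj.
by rewrite (hprod_eq0 jL) ?mulr0 // ?ell_line ?subrr ?mul0r // eq_sym.
Qed.

End Interpolation.

Lemma hprod_node_expansion (R : numFieldType) L (j k : 'I_L) (y : R) : j != k ->
  exists (a0 a1 b0 b1 : R) (V : 'I_L -> R -> R),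
  [/\ forall (m : 'I_L) t, hprod L m (a0 + t * a1) (b0 + t * b1) = t * V m t,
      forall m, polyfun L (V m),
      V j 0 != 0, V k 0 = V j 0 * y
    & forall m, m != j -> m != k -> V m 0 = 0].
Proof.
move=> jk.
pose jr : R := (j : nat)%:R; pose kr : R := (k : nat)%:R.
have kj0 : kr - jr != 0 by rewrite subr_eq0 eqr_nat eq_sym.
(* Start at the node and move so that ell k grows like t and ell j like y t. *)
pose wb := (1 - y) / (kr - jr); pose wa := 1 - kr * wb.
pose c (i : nat) := (i%:R - jr) * (i%:R - kr).
pose mu (i : nat) := wa + i%:R * wb.
have mu_k : mu k = 1 by rewrite /mu /wa; ring.
have mu_j : mu j = y by rewrite /mu /wa /wb -/jr; field.
pose other (m : nat) := if m == j then (k : nat) else j.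
have other_j : other j = k by rewrite /other eqxx.
have other_m (m : 'I_L) : m != j -> other m = j by move=> mj; rewrite /other ifN.
pose V (m : 'I_L) t :=
  mu (other m) * \prod_(i <- iota 0 L | (i != m) && (i != other m)) (c i + t * mu i).
have memL (i : 'I_L) : (i : nat) \in iota 0 L by rewrite mem_iota add0n ltn_ord.
have V0 m : V m 0 = mu (other m) * \prod_(i <- iota 0 L | (i != m) && (i != other m)) c i.
  by rewrite /V; congr (_ * _); apply: eq_bigr => i _; rewrite mul0r addr0.
have Vj : V j 0 = \prod_(i <- iota 0 L | (i != j) && (i != k)) c i.
  by rewrite V0 other_j mu_k mul1r.
exists (lineA j kr), wa, (lineB j kr), wb, V; split.
- move=> m t; have [oL om co] : [/\ other m \in iota 0 L, other m != m & c (other m) = 0].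
    rewrite /other /c; case: eqP => [-> | /eqP mj].
      by rewrite memL subrr mulr0 eq_sym.
    by rewrite memL subrr mul0r eq_sym.
  have ell_dir i : ell i (lineA j kr + t * wa) (lineB j kr + t * wb) = c i + t * mu i.
    by rewrite /ell /c /mu /lineA /lineB; ring.
  rewrite /hprod (bigD1_seq_cond _ _ oL (iota_uniq 0 L) om) ell_dir co add0r.
  by rewrite (eq_bigr _ (fun i _ => ell_dir i)) mulrA.
- move=> m; rewrite -[X in polyfun X]add0n -[X in polyfun (_ + X)](size_iota 0 L).
  exact: polyfun_mul (polyfun_cst _ _) (polyfun_prod_affine _ _ _ _).
- rewrite Vj prodf_seq_neq0; apply/allP => i _; apply/implyP => /andP [ij ik].
  by rewrite mulf_neq0 // subr_eq0 eqr_nat.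
- rewrite V0 other_m 1?eq_sym // mu_j Vj mulrC; congr (_ * _).
  by apply: eq_bigl => i; rewrite andbC.
move=> m mj mk; rewrite V0 other_m //; apply/eqP; rewrite mulf_eq0 prodf_seq_eq0.
apply/orP; right; apply/hasP; exists (k : nat); first exact: memL.
by rewrite /c subrr mulr0 eqxx andbT eq_sym mk eq_sym.
Qed.

Lemma sumr_pair (R : nmodType) L (F : 'I_L -> R) (j k : 'I_L) : j != k ->
  (forall m, m != j -> m != k -> F m = 0) -> \sum_(m < L) F m = F j + F k.
Proof.
move=> jk h; rewrite (bigD1 j) //= (bigD1 k) 1?eq_sym //= big1 ?addr0 //.
by move=> m /andP [mj mk]; apply: h.
Qed.

Section NodeIdentity.
Variables (R : numFieldType) (L s r : nat) (lam : 'I_r -> 'I_L -> R).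
Hypothesis s_gt0 : (0 < s)%N.
Hypothesis hprod_pow_sum : forall a b : R,
  \sum_(m < L) hprod L m a b ^+ (2 * s) =
  \sum_(i < r) (\sum_(m < L) lam i m * hprod L m a b) ^+ (2 * s).

(* Blow up the node ell j = ell k = 0: along a line through it every hprod L m
   has a factor t, and after dividing by t ^+ (2 * s) only the terms j and k
   survive at t = 0. *)
Lemma node_identity (j k : 'I_L) : j != k -> forall y : R,
  1 + y ^+ (2 * s) = \sum_(i < r) (lam i j + lam i k * y) ^+ (2 * s).
Proof.
move=> jk y.
have [a0 [a1 [b0 [b1 [V [hV VP Vj0 Vk Vm]]]]]] := hprod_node_expansion y jk.
pose e t := \sum_(m < L) V m t ^+ (2 * s) -
  \sum_(i < r) (\sum_(m < L) lam i m * V m t) ^+ (2 * s).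
have eP : polyfun (L * (2 * s)) e.
  apply: polyfun_add; first by apply: polyfun_sum => m _; apply: polyfun_exp.
  apply: polyfun_opp; apply: polyfun_sum => i _; apply: polyfun_exp.
  by apply: polyfun_sum => m _; apply: polyfun_scale.
have e0 : e 0 = 0.
  apply: (polyfun_at0 eP) => t t0; apply: (mulfI (expf_neq0 (2 * s) t0)).
  rewrite mulr0 mulrBr !mulr_sumr; apply/eqP; rewrite subr_eq0; apply/eqP.
  transitivity (\sum_(m < L) hprod L m (a0 + t * a1) (b0 + t * b1) ^+ (2 * s)).
    by apply: eq_bigr => m _; rewrite hV exprMn.
  rewrite hprod_pow_sum; apply: eq_bigr => i _; rewrite -exprMn mulr_sumr.
  by congr (_ ^+ _); apply: eq_bigr => m _; rewrite hV mulrCA.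
have comb0 i : \sum_(m < L) lam i m * V m 0 = V j 0 * (lam i j + lam i k * y).
  rewrite (sumr_pair jk) => [|m mj mk]; last by rewrite Vm ?mulr0.
  by rewrite Vk; ring.
have s2 : (2 * s == 0)%N = false by rewrite muln_eq0 /= eqn0Ngt s_gt0.
move: e0; rewrite /e (sumr_pair jk) => [|m mj mk]; last by rewrite Vm // expr0n s2.
under eq_bigr do rewrite comb0 exprMn.
rewrite Vk exprMn -mulr_sumr -[X in X + _ - _]mulr1 -mulrDr -mulrBr.
by move/eqP; rewrite mulf_eq0 expf_eq0 (negbTE Vj0) andbF subr_eq0 => /eqP.
Qed.

End NodeIdentity.

Section RankBound.
Variables (R : numFieldType) (L s r : nat) (lam : 'I_r -> 'I_L -> R).
Hypotheses (s_gt0 : (0 < s)%N) (L_gt1 : (1 < L)%N).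
Hypothesis node_id : forall j k : 'I_L, j != k -> forall y : R,
  1 + y ^+ (2 * s) = \sum_(i < r) (lam i j + lam i k * y) ^+ (2 * s).

Let s2 : (2 * s == 0)%N = false.
Proof. by rewrite muln_eq0 /= eqn0Ngt s_gt0. Qed.

Lemma sum_pow_col (j : 'I_L) : \sum_(i < r) lam i j ^+ (2 * s) = 1.
Proof.
have [k jk] : exists k : 'I_L, j != k.
  have [j0 | j0] := eqVneq (j : nat) 0%N.
    by exists (Ordinal L_gt1); rewrite -val_eqE /= j0.
  by exists (Ordinal (ltnW L_gt1)); rewrite -val_eqE.
have := node_id jk 0; rewrite expr0n s2 addr0 => ->.
by apply: eq_bigr => i _; rewrite mulr0 addr0.
Qed.

(* The coefficient of y in the node identity. *)
Lemma sum_pow_col_mixed (j k : 'I_L) : j != k ->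
  \sum_(i < r) lam i j ^+ (2 * s).-1 * lam i k = 0.
Proof.
move=> jk; pose P : {poly R} :=
  1 + 'X^(2 * s) - \sum_(i < r) ((lam i j)%:P + lam i k *: 'X) ^+ (2 * s).
have P0 : P = 0.
  apply: poly_eq0_horner => x; rewrite /P !hornerE horner_sum (node_id jk).
  by apply/eqP; rewrite subr_eq0; apply/eqP; apply: eq_bigr => i _; rewrite !hornerE.
have := congr1 (fun q : {poly R} => (q^`()).[0]) P0.
rewrite /= deriv0 horner0 /P derivB derivD -polyC1 derivC add0r derivXn.
rewrite raddf_sum /= hornerD hornerN horner_sum hornerMn hornerXn expr0n.
rewrite (_ : ((2 * s).-1 == 0)%N = false); last by lia.
rewrite mul0rn sub0r => /eqP; rewrite oppr_eq0 => /eqP h.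
have : \sum_(i < r) lam i j ^+ (2 * s).-1 * lam i k *+ (2 * s) = 0.
  rewrite -[RHS]h; apply: eq_bigr => i _.
  rewrite deriv_exp derivD derivC derivZ derivX add0r hornerMn hornerM hornerZ hornerC.
  by rewrite horner_exp hornerD hornerC hornerZ hornerX mulr0 addr0 mulr1 mulrC.
by rewrite sumrMnl => /eqP; rewrite mulrn_eq0 s2 => /eqP.
Qed.

Lemma rank_le_node_identity : (L <= r)%N.
Proof.
pose U : 'M[R]_(r, L) := \matrix_(i, m) lam i m.
pose W : 'M[R]_(r, L) := \matrix_(i, m) lam i m ^+ (2 * s).-1.
have WU : W^T *m U = 1%:M.
  apply/matrixP => a b; rewrite !mxE.
  under eq_bigr do rewrite !mxE.
  have [<- | ab] := eqVneq a b; last by rewrite sum_pow_col_mixed.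
  by rewrite -(sum_pow_col a); apply: eq_bigr => i _; rewrite -exprSr prednK ?muln_gt0.
have := mxrankM_maxr W^T U; rewrite WU mxrank1 => h.
exact: leq_trans h (rank_leq_row U).
Qed.

End RankBound.

Section Forms.
Variables (R : numFieldType) (n' : nat).

Definition chart (a b c : R) (i : 'I_n'.+3) : R :=
  if (i : nat) == 0%N then a else if (i : nat) == 1%N then b
  else if (i : nat) == 2%N then c else 0.

Definition lform (m : nat) : {mpoly R[n'.+3]} :=
  'X_(inord 0) + m%:R *: 'X_(inord 1) + (m%:R ^+ 2) *: 'X_(inord 2).

Definition hform (L m : nat) : {mpoly R[n'.+3]} := \prod_(j <- iota 0 L | j != m) lform j.

Lemma chart_affine (a0 a1 b0 b1 t : R) :
  (fun i => chart a0 b0 1 i + t * chart a1 b1 0 i) =1 chart (a0 + t * a1) (b0 + t * b1) 1.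
Proof.
by move=> i; rewrite /chart; case: (nat_of_ord i) => [|[|[|k]]] //=; rewrite mulr0 addr0.
Qed.

Lemma meval_lform m (a b : R) : (lform m).@[chart a b 1] = ell m a b.
Proof. by rewrite /lform !mevalD !mevalZ !mevalXU /chart /ell !inordK //= mulr1. Qed.

Lemma meval_hform L m (a b : R) : (hform L m).@[chart a b 1] = hprod L m a b.
Proof.
rewrite /hform /hprod; elim: (iota 0 L) => [|x r ih]; first by rewrite !big_nil meval1.
by rewrite !big_cons; case: (x != m); rewrite // mevalM ih meval_lform.
Qed.

Lemma lform_homog m : lform m \is 1.-homog.
Proof.
have hX (i : 'I_n'.+3) : ('X_i : {mpoly R[n'.+3]}) \is 1.-homog.
  by rewrite dhomogX; apply/eqP; apply: mdeg1.
by rewrite /lform !dhomogD ?dhomogZ ?hX.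
Qed.

Lemma hform_homog L m : (m < L)%N -> hform L m \is L.-1.-homog.
Proof.
move=> mL; rewrite -(count_iota_neq mL) /hform.
elim: (iota 0 L) => [|x r ih] /=; first by rewrite big_nil dhomog1.
rewrite big_cons; case: (x != m) => //=.
exact: dhomogM (lform_homog x) ih.
Qed.

End Forms.

Lemma sum_even_pow_eq0 (R : realDomainType) r s (F : 'I_r -> R) : (0 < s)%N ->
  \sum_(i < r) F i ^+ (2 * s) = 0 -> forall i, F i = 0.
Proof.
move=> s_gt0 /psumr_eq0P F0 i; apply/eqP.
have /eqP : F i ^+ (2 * s) = 0 by apply: F0 => // j _; rewrite exprn_even_ge0 // oddM.
by rewrite expf_eq0 => /andP [].
Qed.

Definition test_form (R : numFieldType) n' s d : {mpoly R[n'.+3]} :=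
  \sum_(m < d.+1) hform R n' d.+1 m ^+ (2 * s).

Lemma test_form_in_Sigma (R : realType) n' s d : in_Sigma (2 * s) d (test_form R n' s d).
Proof.
by exists d.+1, (fun m : 'I_d.+1 => hform R n' d.+1 m); split=> // m; apply: hform_homog.
Qed.

Lemma test_form_rep_gt (R : realType) n' s d r : (0 < s)%N -> (0 < d)%N ->
  sum_pow_rep (2 * s) d r (test_form R n' s d) -> (d < r)%N.
Proof.
move=> s_gt0 d_gt0 [F [F_homog fE]].
pose g (i : 'I_r) (a b : R) := (F i).@[chart a b 1].
have gP i : polyfun2 d (g i).
  move=> a0 a1 b0 b1.
  apply: eq_polyfun (polyfun_meval (chart a0 b0 1) (chart a1 b1 0) (F_homog i)) => t.
  exact: meval_eq (chart_affine _ _ _ _ _).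
have pow_sum a b : \sum_(m < d.+1) hprod d.+1 m a b ^+ (2 * s) = \sum_(i < r) g i a b ^+ (2 * s).
  have := congr1 (meval (chart a b 1)) fE; rewrite /test_form !raddf_sum /=.
  under eq_bigr do rewrite rmorphXn /= meval_hform.
  by under [in X in _ = X -> _]eq_bigr do rewrite rmorphXn.
have g_nodes i j k : (j < d.+1)%N -> (k < d.+1)%N -> j != k ->
    g i (lineA j k%:R) (lineB j k%:R) = 0.
  move=> jL kL jk; apply: (sum_even_pow_eq0 (F := fun i => g i _ _) s_gt0 _ i).
  rewrite -pow_sum big1 // => m _.
  by rewrite hprod_node // expr0n muln_eq0 /= eqn0Ngt s_gt0.
pose lam (i : 'I_r) (m : 'I_d.+1) := interp_coef d (g i) m.
have hprod_pow_sum a b : \sum_(m < d.+1) hprod d.+1 m a b ^+ (2 * s) =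
    \sum_(i < r) (\sum_(m < d.+1) lam i m * hprod d.+1 m a b) ^+ (2 * s).
  by rewrite pow_sum; apply: eq_bigr => i _; rewrite (interp_hprod (gP i) (g_nodes i)).
exact: (@rank_le_node_identity _ d.+1 _ _ _ s_gt0 d_gt0 (node_identity s_gt0 hprod_pow_sum)).
Qed.

Theorem mainTheorem6 (R : realType) (n s : nat) :
  (3 <= n)%N -> (1 <= s)%N ->
  forall B : nat, exists D : nat, forall d : nat, (D <= d)%N ->
    ~ pyth_le R n (2 * s) d B.
Proof.
case: n => [|[|[|n']]] // _ s_gt0 B; exists B.+1 => d Bd pyth.
have [r [rB rep]] := pyth _ (test_form_in_Sigma R n' s d).
have := test_form_rep_gt s_gt0 (leq_ltn_trans (leq0n B) Bd) rep.
by rewrite ltnNge (leq_trans rB (ltnW Bd)).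
Qed.
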